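(* Let $m$ be a positive integer, $b\in\mathbb{F}_{2^{2m}}$, and let $\gamma$ be a primitive element of $\mathbb{F}_{2^{2m}}$. Put $t=\frac{2^{2m}-1}{3}$. Then $g(x)=x^{t+1}+bx$ is a permutation polynomial of $\mathbb{F}_{2^{2m}}$ if and only if \[ b\neq \frac{\gamma^{t i'}\left(\gamma^{3(k-k')+\frac{2^{2m}+2}{3}(i-i')}+1\right)}{\gamma^{3(k-k')+i-i'}+1}\quad\text{and}\quad b\neq\gamma^{ts} \] for all integers $i,i'$ with $0\le i,i'\le 2$, $i\neq i'$, all $s$ with $0\le s\le 2$, and all $k,k'$ with $1\le k,k'\le t$.
   Context: A polynomial is a permutation polynomial of a finite field if it induces a bijection of that field. Note $3\mid 2^{2m}-1$, so $t$ is an integer. *)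

From HB Require Import structures.
From mathcomp Require Import all_boot all_order all_algebra all_field.
Set Implicit Arguments. Unset Strict Implicit. Unset Printing Implicit Defensive.
Import Order.TTheory GRing.Theory Num.Theory.

Definition tt (m : nat) : nat := (2 ^ (2 * m) - 1) %/ 3.

Definition excl (F : fieldType) (m : nat) (gamma : F) (i i' k k' : nat) : F :=
  (gamma ^+ (tt m * i') *
   (gamma ^ (3%:Z * (k%:Z - k'%:Z) + ((2 ^ (2 * m) + 2) %/ 3)%:Z * (i%:Z - i'%:Z))%R + 1)
   / (gamma ^ (3%:Z * (k%:Z - k'%:Z) + (i%:Z - i'%:Z))%R + 1))%R.

From HB Require Import structures.
From mathcomp Require Import all_boot all_order all_algebra all_field.
From mathcomp Require Import zify ring.
Set Implicit Arguments. Unset Strict Implicit. Unset Printing Implicit Defensive.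
Import GRing.Theory.
Local Open Scope ring_scope.

(* In characteristic 2, f(x) = x^n + b x takes the same value at x <> y exactly
   when b is the secant slope (x^n + y^n) / (x + y) of x^n; since F is finite,
   f is a permutation iff b avoids every such slope (injective_secantP).  So the
   theorem amounts to identifying the set of secant slopes of x^(t+1), where
   t = (q - 1)/3 and q = 2^(2m):
   - writing nonzero elements as gamma^a, the t-th power gamma^(t a) only
     depends on a mod 3 (cube_class_pow);
   - a slope through 0, or through two points of the same cube class, is one of
     the three cube roots of unity gamma^(t s);
   - a slope through points of different cube classes is, after rescaling both
     points by gamma^3 (which leaves slopes of x^(t+1) invariant, secantZ),
     exactly one of the values excl m gamma i i' k k' of the statement
     (excl_closed_form, secant_excluded), and conversely every such value is
     the slope through two distinct points (excl_secant). *)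

Lemma tt_spec (m : nat) : (2 ^ (2 * m) = 3 * tt m + 1)%N.
Proof.
have four_mod : (4 ^ m %% 3 = 1)%N by rewrite -modnXm /= exp1n.
rewrite /tt expnM /=; move: four_mod; have : (0 < 4 ^ m)%N by rewrite expn_gt0.
by move: (4 ^ m)%N => q; lia.
Qed.

Lemma tt_succ (m : nat) : ((2 ^ (2 * m) + 2) %/ 3 = (tt m).+1)%N.
Proof.
by rewrite tt_spec (_ : 3 * tt m + 1 + 2 = (tt m).+1 * 3)%N ?mulnK //; lia.
Qed.

Definition secant (F : fieldType) (n : nat) (x y : F) : F := (x ^+ n + y ^+ n) / (x + y).

Lemma secantC (F : fieldType) (n : nat) (x y : F) : secant n x y = secant n y x.
Proof. by rewrite /secant addrC [y + _]addrC. Qed.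

Lemma secantZ (F : fieldType) (n : nat) (c x y : F) :
  c != 0 -> secant n.+1 (c * x) (c * y) = c ^+ n * secant n.+1 x y.
Proof.
move=> c0; rewrite /secant !exprMn -!mulrDr invfM exprS.
have [->|xy0] := eqVneq (x + y) 0; first by rewrite !invr0 !mulr0.
by field; rewrite c0 xy0.
Qed.

Section Characteristic2.
Variables (F : fieldType) (n : nat) (b : F).
Hypothesis char2F : (2 \in [pchar F])%N.

(* Distinct elements have a nonzero sum, since x + y = x - y. *)
Lemma addr_neq0_pchar2 (x y : F) : x != y -> x + y != 0.
Proof. by rewrite -[y in _ + y](oppr_pchar2 char2F) subr_eq0. Qed.

Lemma collision_secant (x y : F) :
  x != y -> (x ^+ n + b * x == y ^+ n + b * y) = (b == secant n x y).
Proof.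
move=> xy; have xy0 := addr_neq0_pchar2 xy.
rewrite -subr_eq0 (oppr_pchar2 char2F).
have -> : x ^+ n + b * x + (y ^+ n + b * y) = (secant n x y + b) * (x + y).
  by rewrite mulrDl /secant divfK //; ring.
by rewrite mulf_eq0 (negbTE xy0) orbF addr_eq0 (oppr_pchar2 char2F) eq_sym.
Qed.

Lemma injective_secantP :
  injective (fun x : F => x ^+ n + b * x) <->
  (forall x y : F, x != y -> b != secant n x y).
Proof.
split=> [inj x y xy|noslope x y /= fxy].
  by rewrite -collision_secant //; apply: contra xy => /eqP/inj ->.
apply/eqP; apply: contraT => xy; move: (noslope x y xy).
by rewrite -(collision_secant xy) fxy eqxx.
Qed.

End Characteristic2.

Section CubeClasses.
Variables (F : finFieldType) (t : nat) (gamma : F).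
Hypothesis cardF : #|F| = (3 * t).+1.
Hypothesis prim : (3 * t).-primitive_root gamma.

Lemma gamma_neq0 : gamma != 0.
Proof.
apply/negP => /eqP g0; move: (prim_expr_order prim); rewrite g0 expr0n.
rewrite -[3 * t == 0]negbK -lt0n (prim_order_gt0 prim) /=.
by move/eqP; rewrite eq_sym oner_eq0.
Qed.

Lemma unit_gammaX (z : F) : z != 0 -> exists2 a, (a < 3 * t)%N & z = gamma ^+ a.
Proof.
move=> z0; have zq : z ^+ (3 * t) = 1.
  by apply: (mulfI z0); rewrite mulr1 -exprS -cardF expf_card.
by have [a ->] := prim_rootP prim zq; exists a.
Qed.

Lemma cube_class_pow (a : nat) : (gamma ^+ a) ^+ t = gamma ^+ (t * (a %% 3)).
Proof.
rewrite -exprM {1}(divn_eq a 3) mulnDl exprD mulnC.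
have -> : (t * (a %/ 3 * 3) = 3 * t * (a %/ 3))%N.
  by rewrite [(_ * 3)%N]mulnC mulnCA mulnA.
by rewrite exprM (prim_expr_order prim) expr1n mul1r mulnC.
Qed.

Lemma gammaX_inj (a c : nat) : gamma ^+ a = gamma ^+ c -> (a = c %[mod 3])%N.
Proof.
move/eqP; rewrite (eq_prim_root_expr prim) => /eqP eq_ac.
by rewrite -(modn_dvdm a (dvdn_mulr t (dvdnn 3))) eq_ac modn_dvdm // dvdn_mulr.
Qed.

Lemma secant0 (a : nat) : secant t.+1 (gamma ^+ a) 0 = gamma ^+ (t * (a %% 3)).
Proof.
rewrite /secant expr0n !addr0 exprS mulrAC divff ?mul1r ?cube_class_pow //.
by rewrite expf_neq0 // gamma_neq0.
Qed.

Lemma secant_same_class (x y : F) :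
  x ^+ t = y ^+ t -> x + y != 0 -> secant t.+1 x y = x ^+ t.
Proof. by move=> xyt xy0; rewrite /secant !exprS -xyt -mulrDl mulrAC divff ?mul1r. Qed.

Lemma secant_gamma3 (x y : F) :
  secant t.+1 (gamma ^+ 3 * x) (gamma ^+ 3 * y) = secant t.+1 x y.
Proof.
by rewrite secantZ ?expf_neq0 ?gamma_neq0 // -exprM (prim_expr_order prim) mul1r.
Qed.

End CubeClasses.

Lemma excl_closed_form (F : fieldType) (m : nat) (g : F) (i i' k k' : nat) :
  g != 0 ->
  excl m g i i' k k' =
  (g ^+ (i + 3 * k) * g ^+ (tt m * i) + g ^+ (i' + 3 * k') * g ^+ (tt m * i'))
  / (g ^+ (i + 3 * k) + g ^+ (i' + 3 * k')).
Proof.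
move=> g0; rewrite /excl tt_succ; set t := tt m.
have -> : (3%:Z * (k%:Z - k'%:Z) + (t.+1)%:Z * (i%:Z - i'%:Z))%R
   = (((i + 3 * k) + t * i)%N%:Z + (- ((i' + 3 * k') + t * i')%N%:Z))%R by lia.
have -> : (3%:Z * (k%:Z - k'%:Z) + (i%:Z - i'%:Z))%R
   = ((i + 3 * k)%N%:Z + (- (i' + 3 * k')%N%:Z))%R by lia.
have exprz_nat (e : nat) : g ^ e%:Z = g ^+ e by [].
rewrite !expfzDr // -!invr_expz !exprz_nat.
rewrite (exprD _ (i + 3 * k)) (exprD _ (i' + 3 * k')).
set A := g ^+ (i + 3 * k); set C := g ^+ (i' + 3 * k').
set T := g ^+ (t * i); set T' := g ^+ (t * i').
have C0 : C != 0 by rewrite expf_neq0.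
have T'0 : T' != 0 by rewrite expf_neq0.
have -> : (A * T) * (C * T')^-1 + 1 = (A * T + C * T') / (C * T') by field; rewrite C0 T'0.
have -> : A * C^-1 + 1 = (A + C) / C by field.
have [->|AC] := eqVneq (A + C) 0; first by rewrite !mul0r !invr0 !mulr0.
by field; rewrite AC C0 T'0.
Qed.

Section Proposition3.
Variables (F : finFieldType) (m : nat) (gamma : F).
Hypothesis cardF : #|F| = (2 ^ (2 * m))%N.
Hypothesis prim : (#|F|.-1).-primitive_root gamma.
Local Notation t := (tt m).

Lemma card_cube : #|F| = (3 * t).+1.
Proof. by rewrite cardF tt_spec addn1. Qed.

Lemma prim3 : (3 * t).-primitive_root gamma.
Proof. by move: prim; rewrite card_cube. Qed.

Lemma pchar2 : (2 \in [pchar F])%N.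
Proof. exact: card_finPcharP cardF isT. Qed.

Lemma excl_secant (i i' k k' : nat) :
  (i <= 2)%N -> (i' <= 2)%N -> i != i' ->
  gamma ^+ (i + 3 * k) != gamma ^+ (i' + 3 * k') /\
  excl m gamma i i' k k' = secant t.+1 (gamma ^+ (i + 3 * k)) (gamma ^+ (i' + 3 * k')).
Proof.
move=> hi hi' ii'; have class j k0 : (j <= 2)%N -> ((j + 3 * k0) %% 3 = j)%N.
  by move=> hj; lia.
split.
  apply: contra ii' => /eqP/(gammaX_inj prim3); rewrite !class //.
  by move=> ->.
rewrite excl_closed_form ?(gamma_neq0 prim3) //.
by rewrite /secant !exprS !(cube_class_pow prim3) !class.
Qed.

Lemma secant_excluded (x y : F) : x != y ->
  (exists2 s, (s <= 2)%N & secant t.+1 x y = gamma ^+ (t * s)) \/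
  (exists i i' k k', [/\ (i <= 2)%N, (i' <= 2)%N, i != i',
     (1 <= k <= t)%N & (1 <= k' <= t)%N] /\ secant t.+1 x y = excl m gamma i i' k k').
Proof.
have mod3 a : (a %% 3 <= 2)%N by rewrite -ltnS ltn_mod.
wlog y0 : x y / y != 0.
  move=> hwlog xy; have [y0|y0] := eqVneq y 0; last exact: hwlog y0 xy.
  by rewrite secantC; apply: hwlog; [rewrite -y0 | rewrite eq_sym].
move=> xy; have [->|x0] := eqVneq x 0.
  have [c _ ->] := unit_gammaX card_cube prim3 y0.
  by left; exists (c %% 3)%N; rewrite // secantC (secant0 prim3).
have [a ha xE] := unit_gammaX card_cube prim3 x0.
have [c hc yE] := unit_gammaX card_cube prim3 y0; subst x y.
have xy0 := addr_neq0_pchar2 pchar2 xy.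
have [ac|ac] := eqVneq (a %% 3)%N (c %% 3)%N.
  left; exists (a %% 3)%N => //.
  by rewrite secant_same_class // !(cube_class_pow prim3) ac.
right; exists (a %% 3)%N, (c %% 3)%N, (a %/ 3).+1, (c %/ 3).+1; split.
  by split=> //; lia.
have shift e : (e %% 3 + 3 * (e %/ 3).+1 = 3 + e)%N by lia.
rewrite (excl_secant (a %/ 3).+1 (c %/ 3).+1 (mod3 a) (mod3 c) ac).2.
by rewrite !shift !exprD (secant_gamma3 prim3).
Qed.

End Proposition3.

Theorem proposition3 (F : finFieldType) (m : nat) (b gamma : F) :
  (0 < m)%N ->
  #|F| = (2 ^ (2 * m))%N ->
  (#|F|.-1).-primitive_root gamma ->
  bijective (fun x : F => x ^+ (tt m).+1 + b * x) <->
  ((forall i i' k k' : nat,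
      (i <= 2)%N -> (i' <= 2)%N -> i != i' ->
      (1 <= k <= tt m)%N -> (1 <= k' <= tt m)%N ->
      b != excl m gamma i i' k k') /\
   (forall s : nat, (s <= 2)%N -> b != gamma ^+ (tt m * s))).
Proof.
move=> _ cardF prim; have prim3 := prim3 cardF prim.
have perm_inj : bijective (fun x : F => x ^+ (tt m).+1 + b * x) <->
    injective (fun x : F => x ^+ (tt m).+1 + b * x).
  by split; [exact: bij_inj | exact: injF_bij].
apply: (iff_trans perm_inj); apply: (iff_trans (injective_secantP _ _ (pchar2 cardF))).
split=> [noslope | [no_excl no_root] x y xy].
  split=> [i i' k k' hi hi' ii' _ _ | s hs].
    by have [xy ->] := excl_secant cardF prim k k' hi hi' ii'; apply: noslope.
  have -> : (tt m * s = tt m * (s %% 3))%N by rewrite modn_small.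
  by rewrite -(secant0 prim3); apply: noslope; rewrite expf_neq0 // (gamma_neq0 prim3).
have [[s hs ->]|[i [i' [k [k' [[hi hi' ii' hk hk'] ->]]]]]] :=
  secant_excluded cardF prim xy.
  exact: no_root.
exact: no_excl.
Qed.
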